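(* The functions $\mu\mapsto\Pi(D^\mu,C^\mu)$ and $\mu\mapsto G(D^\mu,C^\mu)$ are non-increasing on $[0,\infty)$.
   Context: Let $(X,Y)\sim P_{XY}$ on $\mathcal X\times\mathcal Y$, $\alpha\in(0,1)$. $\mathcal I$ is a finite collection of subsets of $\mathcal Y$ enumerated in a fixed lexicographic order, $w:\mathcal I\to(0,B)$ a bounded positive weight. For $C\in\mathcal I$ let $p_C(x)=\mathbb P(Y\in C\mid X=x)$, $\ell_{x,C}(\mu)=w(C)p_C(x)+\mu(p_C(x)-(1-\alpha))$ for $\mu\ge0$, $\mathcal U_x(\mu)=\max_{C\in\mathcal I}\ell_{x,C}(\mu)$. $C^\mu(x)$ is a maximizer of $\ell_{x,C}(\mu)$ over $C\in\mathcal I$, ties broken in favor of the largest $w(C)$ and then smallest index; $D^\mu(x)=\mathbb 1\{\mathcal U_x(\mu)\ge0\}$. For $D:\mathcal X\to\{0,1\}$, $C:\mathcal X\to\mathcal I$: $\Pi(D,C)=\mathbb E[w(C(X))p_{C(X)}(X)D(X)]$, $G(D,C)=\mathbb E[(1-p_{C(X)}(X)-\alpha)D(X)]$. *)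

From HB Require Import structures.
From mathcomp Require Import all_boot all_order all_algebra.
From mathcomp Require Import all_classical all_reals all_analysis.
Set Implicit Arguments. Unset Strict Implicit. Unset Printing Implicit Defensive.
Import Order.TTheory GRing.Theory Num.Theory.
Local Open Scope ring_scope.

Section Defs.
Context {d1 : measure_display} {X : measurableType d1} {R : realType}.
Context (n : nat) (w : 'I_n.+1 -> R) (p : 'I_n.+1 -> X -> R) (alpha : R).

Definition ell (mu : R) (x : X) (i : 'I_n.+1) : R :=
  w i * p i x + mu * (p i x - (1 - alpha)).

Definition Ux (mu : R) (x : X) : R :=
  \big[Num.max/ell mu x ord0]_(i < n.+1) ell mu x i.

Definition is_best (mu : R) (x : X) (i : 'I_n.+1) : bool :=
  [forall j : 'I_n.+1, (ell mu x j < ell mu x i) ||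
     ((ell mu x j == ell mu x i) &&
       ((w j < w i) || ((w j == w i) && (i <= j)%N)))].

(* C^mu(x) (index of the chosen set); such an index exists and is unique *)
Definition Cmu (mu : R) (x : X) : 'I_n.+1 :=
  odflt ord0 [pick i | is_best mu x i].

Definition Dmu (mu : R) (x : X) : bool := 0 <= Ux mu x.

End Defs.

Section Objectives.
Context {d1 d2 : measure_display} {X : measurableType d1}
  {Y : measurableType d2} {R : realType}.
Context (P : probability (X * Y)%type R).
Context (n : nat) (w : 'I_n.+1 -> R) (p : 'I_n.+1 -> X -> R) (alpha : R).

Definition Pi (D : X -> bool) (C : X -> 'I_n.+1) : \bar R :=
  (\int[P]_z ((w (C z.1) * p (C z.1) z.1 * (D z.1)%:R)%:E))%E.

Definition Gobj (D : X -> bool) (C : X -> 'I_n.+1) : \bar R :=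
  (\int[P]_z (((1 - p (C z.1) z.1 - alpha) * (D z.1)%:R)%:E))%E.

End Objectives.

From HB Require Import structures.
From mathcomp Require Import all_boot all_order all_algebra.
From mathcomp Require Import all_classical all_reals all_analysis.
From mathcomp Require Import measurable_realfun lra.
Set Implicit Arguments. Unset Strict Implicit. Unset Printing Implicit Defensive.
Import Order.TTheory GRing.Theory Num.Theory.
Local Open Scope ring_scope.
Local Open Scope classical_set_scope.

(* Since C^mu1(x) is optimal at mu1 and C^mu2(x) at mu2, adding the two
   optimality inequalities gives (mu2 - mu1) (p_{C^mu1} - p_{C^mu2}) <= 0: raising
   mu raises the coverage p_{C^mu}(x), and then, for mu1 >= 0, lowers the payoff
   w(C^mu) p_{C^mu}(x). If U_x(mu1) < 0, every l_{x,C}(mu1) < 0 forces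
   p_C(x) < 1 - alpha (as w p >= 0), so every l_{x,C} keeps decreasing and
   D^mu(x) is non-increasing in mu. Hence both integrands are pointwise
   non-increasing in mu wherever all p_C(x) >= 0, which holds almost surely
   because p_C is a version of a conditional probability. *)

Section LexicographicOrder.
Context {disp : Order.disp_t} {T : orderType disp}.
Local Open Scope order_scope.

(* (a1, b1, k1) >= (a2, b2, k2) lexicographically, with the index k compared in
   reverse: the tie-breaking rule of C^mu. *)
Definition lex_ge (a1 a2 b1 b2 : T) (k1 k2 : nat) : bool :=
  (a2 < a1) || ((a2 == a1) && ((b2 < b1) || ((b2 == b1) && (k1 <= k2)%N))).

Lemma lex_ge_refl a b k : lex_ge a a b b k k.
Proof. by rewrite /lex_ge !eqxx leqnn !orbT. Qed.

Lemma lex_ge_total a1 a2 b1 b2 k1 k2 :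
  lex_ge a1 a2 b1 b2 k1 k2 || lex_ge a2 a1 b2 b1 k2 k1.
Proof.
rewrite /lex_ge; case: (ltgtP a1 a2) => //= _.
case: (ltgtP b1 b2) => //= _.
by case: leqP => // /ltnW ->; rewrite orbT.
Qed.

Lemma lex_ge_trans a1 a2 a3 b1 b2 b3 k1 k2 k3 :
  lex_ge a1 a2 b1 b2 k1 k2 -> lex_ge a2 a3 b2 b3 k2 k3 ->
  lex_ge a1 a3 b1 b3 k1 k3.
Proof.
rewrite /lex_ge => /orP[a12|/andP[/eqP-> ab12]] /orP[a23|/andP[/eqP-> ab23]].
- by rewrite (lt_trans a23 a12).
- by rewrite a12.
- by rewrite a23.
rewrite eqxx ltxx /=.
move: ab12 ab23 => /orP[b12|/andP[/eqP-> k12]] /orP[b23|/andP[/eqP-> k23]].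
- by rewrite (lt_trans b23 b12).
- by rewrite b12.
- by rewrite b23.
- by rewrite eqxx (leq_trans k12 k23) orbT.
Qed.

Lemma lex_ge_anti a1 a2 b1 b2 k1 k2 :
  lex_ge a1 a2 b1 b2 k1 k2 -> lex_ge a2 a1 b2 b1 k2 k1 -> k1 = k2.
Proof.
rewrite /lex_ge => /orP[a12|/andP[/eqP-> ab12]].
  by rewrite (lt_gtF a12) (gt_eqF a12).
rewrite eqxx ltxx /=; move: ab12 => /orP[b12|/andP[/eqP-> k12]].
  by rewrite (lt_gtF b12) (gt_eqF b12).
by rewrite eqxx ltxx /= => k21; apply/eqP; rewrite eqn_leq k12 k21.
Qed.

End LexicographicOrder.

Section BestChoice.
Context {d : measure_display} {X : measurableType d} {R : realType}.
Context (n : nat) (w : 'I_n.+1 -> R) (p : 'I_n.+1 -> X -> R) (alpha : R).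

Local Notation ell := (ell w p alpha).
Local Notation is_best := (is_best w p alpha).
Local Notation Cmu := (Cmu w p alpha).

Definition prefers mu x (i j : 'I_n.+1) : bool :=
  lex_ge (ell mu x i) (ell mu x j) (w i) (w j) i j.

Lemma is_bestE mu x i : is_best mu x i = [forall j, prefers mu x i j].
Proof. by []. Qed.

Lemma is_best_exists mu x : exists i, is_best mu x i.
Proof.
have refl : reflexive (prefers mu x) by move=> i; exact: lex_ge_refl.
have tr : transitive (prefers mu x) by move=> j i k; exact: lex_ge_trans.
have tot : total (prefers mu x) by move=> i j; exact: lex_ge_total.
have [i _ best_i] := @extremumP _ _ _ ord0 predT id refl tr tot erefl.
by exists i; rewrite is_bestE; apply/forallP => j; exact: best_i.
Qed.

Lemma is_best_uniq mu x i i' : is_best mu x i -> is_best mu x i' -> i = i'.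
Proof.
rewrite !is_bestE => /forallP/(_ i') ii' /forallP/(_ i) i'i.
by apply: val_inj; exact: lex_ge_anti ii' i'i.
Qed.

Lemma is_best_Cmu mu x : is_best mu x (Cmu mu x).
Proof.
rewrite /Cmu; case: pickP => [//|none].
by have [i] := is_best_exists mu x; rewrite none.
Qed.

Lemma CmuE mu x i : (Cmu mu x == i) = is_best mu x i.
Proof.
apply/eqP/idP => [<-|best_i]; first exact: is_best_Cmu.
exact: is_best_uniq (is_best_Cmu mu x) best_i.
Qed.

Lemma ell_le_Cmu mu x j : ell mu x j <= ell mu x (Cmu mu x).
Proof.
move: (is_best_Cmu mu x); rewrite is_bestE => /forallP/(_ j).
by rewrite /prefers /lex_ge => /orP[/ltW|/andP[/eqP-> _]].
Qed.

Lemma Ux_Cmu mu x : Ux w p alpha mu x = ell mu x (Cmu mu x).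
Proof.
apply/le_anti; rewrite le_bigmax andbT.
by apply/bigmax_leP; split=> [|i _]; exact: ell_le_Cmu.
Qed.

Lemma DmuE mu x : Dmu w p alpha mu x = (0 <= ell mu x (Cmu mu x)).
Proof. by rewrite /Dmu Ux_Cmu. Qed.

End BestChoice.

Section PointwiseMonotonicity.
Context {d : measure_display} {X : measurableType d} {R : realType}.
Context (n : nat) (w : 'I_n.+1 -> R) (p : 'I_n.+1 -> X -> R) (alpha : R).
Variables (x : X) (mu1 mu2 : R).
Hypothesis mu1_ge0 : 0 <= mu1.
Hypothesis mu12 : mu1 <= mu2.
Hypothesis w_ge0 : forall i, 0 <= w i.
Hypothesis p_ge0 : forall i, 0 <= p i x.

Local Notation ell := (ell w p alpha).
Local Notation C1 := (Cmu w p alpha mu1 x).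
Local Notation C2 := (Cmu w p alpha mu2 x).
Local Notation D1 := (Dmu w p alpha mu1 x).
Local Notation D2 := (Dmu w p alpha mu2 x).

Lemma le_p_Cmu : p C1 x <= p C2 x.
Proof.
have [<-//|mu1_neq] := eqVneq mu1 mu2.
have mu1_lt : mu1 < mu2 by rewrite lt_neqAle mu1_neq mu12.
have := ell_le_Cmu w p alpha mu1 x C2; have := ell_le_Cmu w p alpha mu2 x C1.
rewrite /ell; nra.
Qed.

Lemma ge_wp_Cmu : w C2 * p C2 x <= w C1 * p C1 x.
Proof.
have := ell_le_Cmu w p alpha mu1 x C2.
have : 0 <= mu1 * (p C2 x - p C1 x) by rewrite mulr_ge0 // subr_ge0 le_p_Cmu.
rewrite /ell; lra.
Qed.

Lemma p_lt_of_not_Dmu mu : 0 <= mu -> ~~ Dmu w p alpha mu x ->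
  forall i, p i x < 1 - alpha.
Proof.
rewrite DmuE -ltNge => mu_ge0 ell_lt0 i.
have := le_lt_trans (ell_le_Cmu w p alpha mu x i) ell_lt0.
have := mulr_ge0 (w_ge0 i) (p_ge0 i); rewrite /ell; nra.
Qed.

Lemma Dmu_antitone : D2 -> D1.
Proof.
apply: contraLR => D1F; rewrite DmuE -ltNge.
have pC2 := p_lt_of_not_Dmu mu1_ge0 D1F C2.
have ell1_lt0 : ell mu1 x C1 < 0 by rewrite ltNge -DmuE.
have := le_lt_trans (ell_le_Cmu w p alpha mu1 x C2) ell1_lt0.
have : (mu2 - mu1) * (p C2 x - (1 - alpha)) <= 0.
  by rewrite mulr_ge0_le0 // ?subr_ge0 // subr_le0 ltW.
rewrite /ell; lra.
Qed.

Lemma Pi_integrand_antitone :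
  w C2 * p C2 x * D2%:R <= w C1 * p C1 x * D1%:R.
Proof.
have [D2T|D2F] := boolP D2.
  by rewrite (Dmu_antitone D2T) !mulr1 ge_wp_Cmu.
by rewrite mulr0 !mulr_ge0.
Qed.

Lemma G_integrand_antitone :
  (1 - p C2 x - alpha) * D2%:R <= (1 - p C1 x - alpha) * D1%:R.
Proof.
have [D2T|D2F] := boolP D2.
  by rewrite (Dmu_antitone D2T) !mulr1 lerB // lerB // le_p_Cmu.
have mu2_ge0 : 0 <= mu2 := le_trans mu1_ge0 mu12.
have := p_lt_of_not_Dmu mu2_ge0 D2F C1.
rewrite mulr0; case: D1 => /=; nra.
Qed.

End PointwiseMonotonicity.

Section Measurability.
Context {d : measure_display} {X : measurableType d} {R : realType}.

Lemma measurable_fun_forall (I : finType) (c : I -> X -> bool) :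
  (forall i, measurable_fun setT (c i)) ->
  measurable_fun setT (fun x => [forall i, c i x]).
Proof.
move=> mc.
have -> : (fun x => [forall i, c i x]) = (fun x => all (c^~ x) (enum I)).
  apply/funext => x.
  by apply/forallP/allP => [+ i _|+ i]; apply; rewrite ?mem_enum.
elim: (enum I) => [|i s IHs] /=; first exact: measurable_cst.
exact: measurable_and.
Qed.

Lemma measurable_fun_select (I : finType) (s : X -> I) (g : I -> X -> R) :
  (forall i, measurable_fun setT (fun x => s x == i)) ->
  (forall i, measurable_fun setT (g i)) ->
  measurable_fun setT (fun x => g (s x) x).
Proof.
move=> ms mg.
have -> : (fun x => g (s x) x) =
    (fun x => \sum_(i <- enum I) (if s x == i then g i x else 0)).
  apply/funext => x; rewrite big_enum /= (bigD1 (s x)) //= eqxx big1 ?addr0 //.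
  by move=> i /negbTE; rewrite eq_sym => ->.
by apply: measurable_sum => i; exact: measurable_fun_ifT.
Qed.

Context (n : nat) (w : 'I_n.+1 -> R) (p : 'I_n.+1 -> X -> R) (alpha : R).
Hypothesis mp : forall i, measurable_fun setT (p i).

Lemma measurable_fun_ell mu i :
  measurable_fun setT (fun x => ell w p alpha mu x i).
Proof.
by apply: measurable_funD; apply: measurable_funM => //; exact: measurable_funB.
Qed.

Lemma measurable_fun_Cmu_eq mu i :
  measurable_fun setT (fun x => Cmu w p alpha mu x == i).
Proof.
under eq_fun do rewrite CmuE is_bestE.
apply: measurable_fun_forall => j; rewrite /prefers /lex_ge.
have mellj := measurable_fun_ell mu j; have melli := measurable_fun_ell mu i.
apply: measurable_or; first exact: measurable_fun_ltr mellj melli.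
apply: measurable_and; first exact: measurable_fun_eqr mellj melli.
exact: measurable_cst.
Qed.

Lemma measurable_fun_select_Dmu mu (f : 'I_n.+1 -> X -> R) :
  (forall i, measurable_fun setT (f i)) ->
  measurable_fun setT
    (fun x => f (Cmu w p alpha mu x) x * (Dmu w p alpha mu x)%:R).
Proof.
move=> mf; pose g i x := if 0 <= ell w p alpha mu x i then f i x else 0.
have -> : (fun x => f (Cmu w p alpha mu x) x * (Dmu w p alpha mu x)%:R) =
    (fun x => g (Cmu w p alpha mu x) x).
  by apply/funext => x; rewrite DmuE /g; case: ifP; rewrite ?mulr1 ?mulr0.
apply: measurable_fun_select => [|i]; first exact: measurable_fun_Cmu_eq.
apply: measurable_fun_ifT => //.
exact: measurable_fun_ler (measurable_cst _) (measurable_fun_ell _ _).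
Qed.

End Measurability.

Section AlmostEverywhere.
Local Open Scope ereal_scope.
Context {d : measure_display} {T : measurableType d} {R : realType}.
Variable mu : {measure set T -> \bar R}.

Lemma measurable_negset (f : T -> R) : measurable_fun setT f ->
  measurable [set x | f x < 0]%R.
Proof.
move=> mf; have mlt0 := measurable_fun_ltr mf (measurable_cst (0 : R)%R).
by have := mlt0 measurableT [set true]; rewrite setTI; apply.
Qed.

Lemma ae_le_integral (D : set T) (f g : T -> \bar R) : measurable D ->
  measurable_fun D f -> measurable_fun D g ->
  {ae mu, forall x, D x -> f x <= g x} ->
  \int[mu]_(x in D) f x <= \int[mu]_(x in D) g x.
Proof.
move=> mD mf mg fg; rewrite integralE [leRHS]integralE.
apply: leeB; apply: ae_ge0_le_integral => //;
  try exact: measurable_funepos; try exact: measurable_funeneg.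
- apply: filterS fg => x fgx Dx; rewrite !funeposE.
  by rewrite ge_max !le_max (fgx Dx) lexx orbT.
- apply: filterS fg => x fgx Dx; rewrite !funenegE.
  by rewrite ge_max !le_max leeN2 (fgx Dx) lexx orbT.
Qed.

Lemma ae_ge0_of_integral_negset_ge0 (f : T -> R) : measurable_fun setT f ->
  0 <= \int[mu]_(x in [set x | f x < 0]%R) (f x)%:E ->
  {ae mu, forall x, 0 <= f x}%R.
Proof.
move=> mf int_ge0; pose N := [set x | f x < 0]%R.
have mN : measurable N := measurable_negset mf.
have int_fE : \int[mu]_(x in N) (f x)%:E = - \int[mu]_(x in N) `|(f x)%:E|.
  rewrite -integral_ge0N => [|x _]; last exact: abse_ge0.
  by apply: eq_integral => x /set_mem Nx; rewrite lte0_abs ?lte_fin // oppeK.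
have int_f0 : \int[mu]_(x in N) `|(f x)%:E| = 0.
  apply/eqP; rewrite eq_le -oppe_ge0 -int_fE int_ge0.
  by apply: integral_ge0 => x _; exact: abse_ge0.
have mfE : measurable_fun N (fun x => (f x)%:E).
  by apply/measurable_EFinP; exact: measurable_funTS.
have := (ae_eq_integral_abs mu mN mfE).1 int_f0.
apply: filterS => x f0; rewrite leNgt; apply/negP => Nx.
by move: (f0 Nx) => [fx0]; rewrite fx0 ltxx in Nx.
Qed.

End AlmostEverywhere.

Lemma cond_prob_ae_ge0 {d1 d2 : measure_display} {X : measurableType d1}
    {Y : measurableType d2} {R : realType} (mu : {measure set (X * Y) -> \bar R})
    (S : set Y) (q : X -> R) :
  measurable_fun setT q ->
  (forall A, measurable A ->
     mu (A `*` S) = (\int[mu]_(z in A `*` setT) (q z.1)%:E)%E) ->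
  {ae mu, forall z, 0 <= q z.1}.
Proof.
move=> mq q_version.
have mq1 : measurable_fun setT (fun z : X * Y => q z.1).
  exact: measurableT_comp mq measurable_fst.
apply: ae_ge0_of_integral_negset_ge0 mq1 _.
have -> : [set z : X * Y | q z.1 < 0] = [set x | q x < 0] `*` setT.
  by apply/seteqP; split=> [z qz|z []].
by rewrite -q_version ?measure_ge0 //; exact: measurable_negset.
Qed.

Theorem corollary1
  (d1 d2 : measure_display) (X : measurableType d1) (Y : measurableType d2)
  (R : realType) (P : probability (X * Y)%type R)
  (alpha : R) (B : R) (n : nat)
  (S : 'I_n.+1 -> set Y) (w : 'I_n.+1 -> R) (p : 'I_n.+1 -> X -> R) :
  0 < alpha < 1 ->
  injective S ->
  (forall i, measurable (S i)) ->
  (forall i, 0 < w i < B) ->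
  (* p i is a version of x |-> P(Y \in S i | X = x) *)
  (forall i, measurable_fun setT (p i)) ->
  (forall i (A : set X), measurable A ->
     P (A `*` S i) = (\int[P]_(z in A `*` setT) (p i z.1)%:E)%E) ->
  forall mu1 mu2 : R, 0 <= mu1 -> mu1 <= mu2 ->
    (Pi P w p (Dmu w p alpha mu2) (Cmu w p alpha mu2)
       <= Pi P w p (Dmu w p alpha mu1) (Cmu w p alpha mu1))%E /\
    (Gobj P p alpha (Dmu w p alpha mu2) (Cmu w p alpha mu2)
       <= Gobj P p alpha (Dmu w p alpha mu1) (Cmu w p alpha mu1))%E.
Proof.
move=> _ _ _ w_bnd mp p_version mu1 mu2 mu1_ge0 mu12.
have w_ge0 i : 0 <= w i by case/andP: (w_bnd i) => /ltW.
have p_ge0 : {ae P, forall z, forall i, 0 <= p i z.1}.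
  by apply: filter_forall => i; exact: cond_prob_ae_ge0 (mp i) (p_version i).
have mintegrand (f : 'I_n.+1 -> X -> R) : (forall i, measurable_fun setT (f i)) ->
    forall mu, measurable_fun setT (fun z : X * Y =>
      (f (Cmu w p alpha mu z.1) z.1 * (Dmu w p alpha mu z.1)%:R)%:E).
  move=> mf mu; apply/measurable_EFinP.
  have := measurable_fun_select_Dmu w alpha mp mu mf.
  by move/measurableT_comp; apply; exact: measurable_fst.
have mwp i : measurable_fun setT (fun x => w i * p i x) by exact: measurable_funM.
have mslack i : measurable_fun setT (fun x => 1 - p i x - alpha).
  by apply: measurable_funB => //; exact: measurable_funB.
have mPi := mintegrand (fun i x => w i * p i x) mwp.
have mG := mintegrand (fun i x => 1 - p i x - alpha) mslack.
split; apply: ae_le_integral => //; try exact: mPi; try exact: mG;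
  move: p_ge0; apply: filterS => z pz _.
- exact: Pi_integrand_antitone.
- exact: G_integrand_antitone.
Qed.
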